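(* Let $p,q$ be positive integers and let $m,s$ be positive integers. Then $G_{2^m s}$ has the same parity as $G_s$, and if $G_s$ is even then $\frac12 G_{2^m s}\equiv 1\pmod 2$.
   Context: $A=pq+2$, $B=\sqrt{A^2-4}$, $G_n=\left(\frac{A+B}{2}\right)^n+\left(\frac{A-B}{2}\right)^n$ (an integer). *)

From Stdlib Require Import Reals ZArith.
Open Scope R_scope.

Definition Aval (p q : nat) : R := INR (p * q) + 2.
Definition Bval (p q : nat) : R := sqrt (Aval p q ^ 2 - 4).
Definition G (p q : nat) (n : nat) : R :=
  ((Aval p q + Bval p q) / 2) ^ n + ((Aval p q - Bval p q) / 2) ^ n.

(* The numbers x = (A+B)/2 and y = (A-B)/2 satisfy x + y = A and x y = 1, so
   G_n = x^n + y^n is the Lucas sequence V_n(A, 1), an integer sequence with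
   V_{2n} = V_n^2 - 2.  Since c^2 - 2 has the parity of c, doubling the index
   preserves parity; and if c = 2k is even then (c^2 - 2)/2 = 2k^2 - 1 is odd. *)

From Stdlib Require Import Reals ZArith Lia Lra Psatz.
Open Scope R_scope.

Fixpoint lucasV (a : Z) (n : nat) : Z :=
  match n with
  | O => 2%Z
  | S O => a
  | S (S k as n') => (a * lucasV a n' - lucasV a k)%Z
  end.

Section PowerSums.

Variables x y : R.
Hypothesis xy_1 : x * y = 1.

Lemma power_sum_double (n : nat) :
  x ^ (2 * n) + y ^ (2 * n) = (x ^ n + y ^ n) ^ 2 - 2.
Proof.
  assert (Hn : x ^ n * y ^ n = 1) by (rewrite <- Rpow_mult_distr, xy_1; apply pow1).
  rewrite (Nat.mul_comm 2 n), !pow_mult.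
  transitivity ((x ^ n + y ^ n) ^ 2 - 2 * (x ^ n * y ^ n)); [ring|].
  rewrite Hn; ring.
Qed.

Lemma power_sum_lucasV (a : Z) (n : nat) :
  x + y = IZR a -> x ^ n + y ^ n = IZR (lucasV a n).
Proof.
  intros Hsum.
  assert (Hpair : x ^ n + y ^ n = IZR (lucasV a n) /\
                  x ^ S n + y ^ S n = IZR (lucasV a (S n))).
  { induction n as [|n [IH IH']].
    - simpl; split; lra.
    - split; [exact IH'|].
      change (lucasV a (S (S n))) with (a * lucasV a (S n) - lucasV a n)%Z.
      rewrite minus_IZR, mult_IZR, <- IH, <- IH', <- Hsum.
      replace (x ^ n + y ^ n) with ((x ^ n + y ^ n) * (x * y)) by (rewrite xy_1; ring).
      simpl; ring. }
  apply Hpair.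
Qed.

End PowerSums.

Lemma quadratic_roots_mul (a : R) : 2 <= a ->
  ((a + sqrt (a ^ 2 - 4)) / 2) * ((a - sqrt (a ^ 2 - 4)) / 2) = 1.
Proof.
  intros Ha.
  assert (H4 : 0 <= a ^ 2 - 4) by nra.
  pose proof (sqrt_sqrt _ H4).
  nra.
Qed.

Lemma lucasV_double (a : Z) (n : nat) : (2 <= a)%Z ->
  lucasV a (2 * n) = (lucasV a n ^ 2 - 2)%Z.
Proof.
  intros Ha.
  set (r := sqrt (IZR a ^ 2 - 4)).
  assert (Hmul : ((IZR a + r) / 2) * ((IZR a - r) / 2) = 1)
    by (apply quadratic_roots_mul, IZR_le, Ha).
  assert (Hsum : (IZR a + r) / 2 + (IZR a - r) / 2 = IZR a) by field.
  apply eq_IZR.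
  rewrite <- (power_sum_lucasV _ _ Hmul a (2 * n) Hsum), power_sum_double by exact Hmul.
  rewrite (power_sum_lucasV _ _ Hmul a n Hsum), minus_IZR, Z.pow_2_r, mult_IZR.
  simpl; ring.
Qed.

Lemma G_lucasV (p q n : nat) :
  G p q n = IZR (lucasV (Z.of_nat (p * q) + 2) n).
Proof.
  assert (HA : Aval p q = IZR (Z.of_nat (p * q) + 2))
    by (unfold Aval; rewrite plus_IZR, <- INR_IZR_INZ; reflexivity).
  unfold G, Bval.
  apply power_sum_lucasV.
  - apply quadratic_roots_mul.
    unfold Aval; pose proof (pos_INR (p * q)); lra.
  - rewrite <- HA; field.
Qed.

Lemma even_sqr_sub_2 (c : Z) : Z.even (c ^ 2 - 2) = Z.even c.
Proof.
  rewrite Z.even_sub, Z.pow_2_r, Z.even_mul.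
  destruct (Z.even c); reflexivity.
Qed.

Lemma odd_half_sqr_sub_2 (c : Z) : Z.even c = true -> Z.odd ((c ^ 2 - 2) / 2) = true.
Proof.
  intros Hc.
  apply Z.even_spec in Hc as [k ->].
  replace ((2 * k) ^ 2 - 2)%Z with ((2 * k ^ 2 - 1) * 2)%Z by ring.
  rewrite Z.div_mul by lia.
  rewrite Z.odd_sub, Z.odd_mul; reflexivity.
Qed.

Section Doubling.

Variable t : nat -> Z.
Hypothesis t_double : forall n, t (2 * n) = (t n ^ 2 - 2)%Z.

Lemma even_iter_double (m s : nat) : Z.even (t (2 ^ m * s)) = Z.even (t s).
Proof.
  induction m as [|m IH].
  - now rewrite Nat.pow_0_r, Nat.mul_1_l.
  - rewrite Nat.pow_succ_r', <- Nat.mul_assoc, t_double, even_sqr_sub_2.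
    exact IH.
Qed.

Lemma odd_half_iter_double (m s : nat) : (0 < m)%nat ->
  Z.even (t s) = true -> Z.odd (t (2 ^ m * s) / 2) = true.
Proof.
  intros Hm Hs.
  destruct m as [|m]; [lia|].
  rewrite Nat.pow_succ_r', <- Nat.mul_assoc, t_double.
  apply odd_half_sqr_sub_2.
  now rewrite even_iter_double.
Qed.

End Doubling.

Theorem lemma1 (p q m s : nat) (hp : (0 < p)%nat) (hq : (0 < q)%nat)
  (hm : (0 < m)%nat) (hs : (0 < s)%nat) :
  exists a b : Z,
    IZR a = G p q (2 ^ m * s) /\ IZR b = G p q s /\
    Z.even a = Z.even b /\
    (Z.even b = true -> Z.odd (a / 2) = true).
Proof.
  set (A := (Z.of_nat (p * q) + 2)%Z).
  assert (A_double : forall n, lucasV A (2 * n) = (lucasV A n ^ 2 - 2)%Z)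
    by (intros n; apply lucasV_double; lia).
  exists (lucasV A (2 ^ m * s)), (lucasV A s).
  split; [symmetry; apply G_lucasV|].
  split; [symmetry; apply G_lucasV|].
  split.
  - apply (even_iter_double _ A_double).
  - apply (odd_half_iter_double _ A_double), hm.
Qed.
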